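(* For $\vec\mu\in\mathbb{R}^k$ and $\vec v\in(\mathbb{R}^{\ge0})^k$, let $f(\vec\mu,\vec v)$ be the supremum of $\mathbb{E}[\max_{j<k}\vec x(j)]$ over all random vectors $\vec x$ in $\mathbb{R}^k$ with $\mathbb{E}[\vec x]=\vec\mu$ and $\mathrm{Var}(\vec x(j))=\vec v(j)^2$ for all $j<k$. Then for every $\vec\mu\in\mathbb{R}^k$, $\vec v\in(\mathbb{R}^{\ge0})^k$: (1) $\max_{j<k}\vec\mu(j)\le f(\vec\mu,\vec v)\le\max_{j<k}\vec\mu(j)+\frac12\sum_{j<k}\vec v(j)$; (2) if $\vec\mu_i\in\mathbb{R}^k,\vec v_i\in(\mathbb{R}^{\ge0})^k$ for $i\in\{0,1\}$ satisfy $\vec\mu=\frac12(\vec\mu_0+\vec\mu_1)$ and $\vec v(j)^2=\frac12\sum_{i\in 2}\big[\vec v_i(j)^2+(\vec\mu_i(j)-\vec\mu(j))^2\big]$ for all $j<k$, then $\frac12\big(f(\vec\mu_0,\vec v_0)+f(\vec\mu_1,\vec v_1)\big)\le f(\vec\mu,\vec v)$. *)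

From HB Require Import structures.
From mathcomp Require Import all_boot all_order all_algebra.
From mathcomp Require Import all_classical all_reals all_analysis.
Set Implicit Arguments. Unset Strict Implicit. Unset Printing Implicit Defensive.
Import Order.TTheory GRing.Theory Num.Theory.
Local Open Scope ring_scope.

(* maximum of the coordinates of a vector x in R^n (meaningful for n > 0) *)
Definition maxv (R : realType) (n : nat) (x : 'I_n -> R) : R :=
  fine (\big[Order.max/-oo%E]_(j < n) (x j)%:E).

Definition fmax (R : realType) (n : nat) (mu v : 'I_n -> R) : \bar R :=
  ereal_sup [set e | exists (d : measure_display) (T : measurableType d)
      (P : probability T R) (X : 'I_n -> {RV P >-> R}),
      (forall j, (X j : T -> R) \in Lfun P 2%:E) /\
      (forall j, ('E_P[X j] = (mu j)%:E)%E) /\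
      (forall j, ('V_P[X j] = (v j ^+ 2)%:E)%E) /\
      (e = 'E_P[fun w => maxv (fun j => X j w)])%E].

From HB Require Import structures.
From mathcomp Require Import all_boot all_order all_algebra.
From mathcomp Require Import all_classical all_reals all_analysis.
From mathcomp Require Import ring lra measurable_realfun.
Set Implicit Arguments. Unset Strict Implicit. Unset Printing Implicit Defensive.
Import Order.TTheory GRing.Theory Num.Theory.
Local Open Scope ring_scope.
Local Open Scope classical_set_scope.

(* Upper bound: with Y_j = X_j - mu_j,
   max_j X_j <= max_j mu_j + sum_j Y_j^+, and y^+ <= (y + c)^2 / (4c) for every
   c > 0; taking expectations gives sum_j (v_j^2 + c^2) / (4c), which tends to
   v_j / 2 as c decreases to v_j.
   Midpoint inequality: given random vectors X0, X1 realising values of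
   f(mu0, v0) and f(mu1, v1), sample X0 or X1 according to a fair coin, i.e. on
   the disjoint union of the two probability spaces with the measure
   (P0 + P1) / 2.  The result has mean mu, variances
   (1/2) sum_i (v_i(j)^2 + (mu_i(j) - mu(j))^2) = v(j)^2, and expected maximum the
   average of the two values.  Since all feasible values are finite and bounded,
   f is the supremum of a nonempty bounded set of reals, and the midpoint
   inequality passes to suprema. *)

Lemma max0_le_sqrD_div (R : realFieldType) (c y : R) : 0 < c ->
  Num.max 0 y <= (y + c) ^+ 2 / (4 * c).
Proof.
move=> c_gt0; have c4_gt0 : 0 < 4 * c by rewrite mulr_gt0.
rewrite ge_max divr_ge0 ?sqr_ge0 ?(ltW c4_gt0)//= -subr_ge0.
have -> : (y + c) ^+ 2 / (4 * c) - y = (y - c) ^+ 2 / (4 * c).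
  by field; rewrite gt_eqF.
by rewrite divr_ge0 ?sqr_ge0 ?ltW.
Qed.

Lemma sqr_addr_div_le (R : realFieldType) (v e : R) : 0 <= v -> 0 < e ->
  (v ^+ 2 + (v + e) ^+ 2) / (4 * (v + e)) <= v / 2 + e.
Proof.
move=> v_ge0 e_gt0; have ve_gt0 : 0 < v + e by rewrite ltr_wpDl.
rewrite -subr_ge0; have -> : v / 2 + e - (v ^+ 2 + (v + e) ^+ 2) / (4 * (v + e))
    = (4 * v * e + 3 * e ^+ 2) / (4 * (v + e)).
  by field; rewrite gt_eqF.
by apply: divr_ge0; [nra | rewrite mulr_ge0// ltW].
Qed.

Section maxv.
Context (R : realType) (n : nat).
Implicit Types (x : 'I_n -> R).

Lemma maxvE x : (0 < n)%N ->
  (maxv x)%:E = \big[Order.max/-oo%E]_j (x j)%:E.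
Proof.
move=> n_gt0; rewrite /maxv.
by have [j _ ->] := eq_bigmax (Ordinal n_gt0) xpredT (fun j => (x j)%:E) isT
  (fun j _ => leNye _).
Qed.

Lemma le_maxv x j : x j <= maxv x.
Proof.
by rewrite -lee_fin maxvE ?le_bigmax// (leq_ltn_trans (leq0n j) (ltn_ord j)).
Qed.

Lemma maxv_le x c : (0 < n)%N -> (forall j, x j <= c) -> maxv x <= c.
Proof.
move=> n_gt0 xc; rewrite -lee_fin maxvE// bigmax_le ?leNye// => j _.
by rewrite lee_fin.
Qed.

Lemma norm_maxv_le x : (0 < n)%N -> `|maxv x| <= \sum_j `|x j|.
Proof.
move=> n_gt0; have le_sum j : `|x j| <= \sum_j `|x j|.
  by rewrite (bigD1 j)//= lerDl sumr_ge0.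
rewrite ler_norml; apply/andP; split.
  exact: le_trans (lerNnormlW (le_sum (Ordinal n_gt0))) (le_maxv _ _).
by apply: maxv_le => // j; exact: le_trans (ler_norm _) (le_sum j).
Qed.

Lemma maxv_le_sqrD x (mu c : 'I_n -> R) : (0 < n)%N -> (forall j, 0 < c j) ->
  maxv x <= maxv mu + \sum_j (x j - mu j + c j) ^+ 2 / (4 * c j).
Proof.
move=> n_gt0 c_gt0; apply: maxv_le => // i; rewrite (bigD1 i)//=.
have := max0_le_sqrD_div (x i - mu i) (c_gt0 i); rewrite ge_max => /andP[_].
have : 0 <= \sum_(j | j != i) (x j - mu j + c j) ^+ 2 / (4 * c j).
  by apply: sumr_ge0 => j _; rewrite divr_ge0 ?sqr_ge0// ltW// mulr_gt0.
have := le_maxv mu i; lra.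
Qed.

End maxv.

Lemma measurable_bigmaxe d (T : measurableType d) (R : realType) (I : Type)
    (s : seq I) (F : I -> T -> \bar R) :
  (forall i, measurable_fun setT (F i)) ->
  measurable_fun setT (fun w => \big[Order.max/-oo%E]_(i <- s) F i w).
Proof.
move=> mF; elim: s => [|i s IHs].
  by under eq_fun do rewrite big_nil; exact: measurable_cst.
by under eq_fun do rewrite big_cons; exact: measurable_maxe.
Qed.

Section maxv_random_vector.
Context d (T : measurableType d) (R : realType) (n : nat).
Variable X : 'I_n -> T -> R.

Lemma measurable_maxv : (forall j, measurable_fun setT (X j)) ->
  measurable_fun setT (fun w => maxv (X^~ w)).
Proof.
move=> mX; apply: (measurableT_comp (fine_measurable measurableT)).
by apply: measurable_bigmaxe => j; exact/measurable_EFinP.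
Qed.

Lemma Lfun1_maxv (mu : {measure set T -> \bar R}) : (0 < n)%N ->
  (forall j, X j \in Lfun mu 1) -> (fun w => maxv (X^~ w)) \in Lfun mu 1.
Proof.
move=> n_gt0 X1; have mX j : measurable_fun setT (X j).
  by have := X1 j; rewrite inE => /andP[]; rewrite inE.
have /Lfun1_integrable sum1 : \sum_j (Num.norm \o X j) \in Lfun mu 1.
  by apply: rpred_sum => j _; exact: Lfun_norm.
apply/Lfun1_integrable; apply: le_integrable sum1 => //.
  exact/measurable_EFinP/measurable_maxv.
move=> w _; rewrite fct_sumE lee_fin /= [leRHS]ger0_norm ?sumr_ge0//.
exact: norm_maxv_le.
Qed.

End maxv_random_vector.

Section sum_space.
Context d0 d1 (T0 : measurableType d0) (T1 : measurableType d1).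

Definition sum_space := (T0 + T1)%type.
HB.instance Definition _ := Choice.on sum_space.
HB.instance Definition _ := isPointed.Build sum_space (inl point).

Definition sum_measurable : set (set sum_space) :=
  [set A | measurable (@inl T0 T1 @^-1` A) /\ measurable (@inr T0 T1 @^-1` A)].

Lemma sum_measurable0 : sum_measurable set0.
Proof. by split; rewrite preimage_set0. Qed.

Lemma sum_measurableC A : sum_measurable A -> sum_measurable (~` A).
Proof. by move=> [mA0 mA1]; split; rewrite preimage_setC; exact: measurableC. Qed.

Lemma sum_measurable_bigcup (F : (set sum_space)^nat) :
  (forall i, sum_measurable (F i)) -> sum_measurable (\bigcup_i F i).
Proof.
move=> mF; split; rewrite preimage_bigcup; apply: bigcupT_measurable => i.
  exact: (mF i).1.
exact: (mF i).2.
Qed.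

HB.instance Definition _ := @isMeasurable.Build default_measure_display
  sum_space sum_measurable
  sum_measurable0 sum_measurableC sum_measurable_bigcup.

Definition sum_inl : T0 -> sum_space := inl.
Definition sum_inr : T1 -> sum_space := inr.

Lemma measurable_sum_inl : measurable_fun setT sum_inl.
Proof. by move=> _ A [mA _]; rewrite setTI. Qed.

Lemma measurable_sum_inr : measurable_fun setT sum_inr.
Proof. by move=> _ A [_ mA]; rewrite setTI. Qed.

HB.instance Definition _ := isMeasurableFun.Build _ _ _ _ sum_inl measurable_sum_inl.
HB.instance Definition _ := isMeasurableFun.Build _ _ _ _ sum_inr measurable_sum_inr.

Section sum_case.
Context d' (Y : measurableType d') (f0 : {mfun T0 >-> Y}) (f1 : {mfun T1 >-> Y}).

Definition sum_case (w : sum_space) : Y :=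
  match w with inl a => f0 a | inr b => f1 b end.

Lemma measurable_sum_case : measurable_fun setT sum_case.
Proof. by move=> _ B mB; rewrite setTI; split; exact: measurable_funPTI. Qed.

HB.instance Definition _ := isMeasurableFun.Build _ _ _ _ sum_case measurable_sum_case.

End sum_case.
End sum_space.

Section half_mixture.
Context d0 d1 (T0 : measurableType d0) (T1 : measurableType d1) (R : realType).
Variables (P0 : probability T0 R) (P1 : probability T1 R).

Definition half_mixture : set (sum_space T0 T1) -> \bar R :=
  measure_add (mscale (2^-1)%:nng (distribution P0 (@sum_inl _ _ T0 T1)))
              (mscale (2^-1)%:nng (distribution P1 (@sum_inr _ _ T0 T1))).

HB.instance Definition _ := Measure.on half_mixture.

Local Open Scope ereal_scope.

Lemma half_mixture_setT : half_mixture setT = 1.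
Proof.
rewrite /half_mixture measure_addE/= /mscale/= !probability_setT !mule1.
by rewrite -EFinD; congr EFin; field.
Qed.

HB.instance Definition _ :=
  Measure_isProbability.Build _ _ _ half_mixture half_mixture_setT.

Lemma ge0_integral_half_mixture (f : sum_space T0 T1 -> \bar R) :
    measurable_fun setT f -> (forall w, 0 <= f w) ->
  \int[half_mixture]_w f w =
    (2^-1)%:E * (\int[P0]_x f (inl x) + \int[P1]_x f (inr x)).
Proof.
move=> mf f_ge0; rewrite ge0_integral_measure_add// !ge0_integral_mscale//.
rewrite !ge0_integral_distribution//.
by rewrite [RHS]muleDr// ge0_adde_def ?inE ?integral_ge0.
Qed.

Lemma integral_half_mixture (f : sum_space T0 T1 -> \bar R) :
    measurable_fun setT f ->
    P0.-integrable setT (f \o inl) -> P1.-integrable setT (f \o inr) ->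
  \int[half_mixture]_w f w =
    (2^-1)%:E * (\int[P0]_x f (inl x) + \int[P1]_x f (inr x)).
Proof.
move=> mf int0 int1.
have split_integral d' (T : measurableType d') (P : probability T R)
    (g : T -> sum_space T0 T1) : P.-integrable setT (f \o g) ->
  [/\ \int[P]_x f (g x) = \int[P]_x f^\+ (g x) - \int[P]_x f^\- (g x),
      \int[P]_x f^\+ (g x) \is a fin_num & \int[P]_x f^\- (g x) \is a fin_num].
  move=> intg; split.
  - by rewrite [LHS](integralE _ _ (f \o g)) funepos_comp funeneg_comp.
  - have := integrable_fin_num measurableT (integrable_funepos measurableT intg).
    by rewrite funepos_comp.
  - have := integrable_fin_num measurableT (integrable_funeneg measurableT intg).
    by rewrite funeneg_comp.
rewrite [LHS]integralE.
rewrite (ge0_integral_half_mixture (measurable_funepos mf)) ?funepos_ge0//.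
rewrite (ge0_integral_half_mixture (measurable_funeneg mf)) ?funeneg_ge0//.
have [-> /fineK <- /fineK <-] := split_integral _ _ P0 inl int0.
have [-> /fineK <- /fineK <-] := split_integral _ _ P1 inr int1.
move: (fine _) (fine _) (fine _) (fine _) => a b c e.
by rewrite -!EFinD -!EFinM; congr EFin; ring.
Qed.

Lemma Lfun_half_mixture (g : sum_space T0 T1 -> R) r : (1 <= r)%R ->
    measurable_fun setT g ->
    g \o inl \in Lfun P0 r%:E -> g \o inr \in Lfun P1 r%:E ->
  g \in Lfun half_mixture r%:E.
Proof.
move=> r1 mg g0 g1; rewrite inE; apply/andP; split; first by rewrite inE.
rewrite inE /finite_norm unlock /Lnorm; apply: poweR_lty.
have mgr : measurable_fun setT (fun w => (`|g w| `^ r)%:E).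
  by apply/measurable_EFinP/(measurableT_comp (measurable_powR _))/measurableT_comp.
under eq_integral => w _ do rewrite (_ : `|(EFin \o g) w| `^ r = (`|g w| `^ r)%:E)//.
have gr_ge0 w : 0 <= (`|g w| `^ r)%:E by rewrite lee_fin powR_ge0.
rewrite ge0_integral_half_mixture//.
have := integrable_lty measurableT (Lfun_integrable r1 g0).
have := integrable_lty measurableT (Lfun_integrable r1 g1).
by move=> int1 int0; rewrite lte_mul_pinfty// lte_add_pinfty.
Qed.

Lemma expectation_half_mixture (f : sum_space T0 T1 -> R) :
    measurable_fun setT f -> f \o inl \in Lfun P0 1 -> f \o inr \in Lfun P1 1 ->
  'E_half_mixture[f] = (2^-1)%:E * ('E_P0[f \o inl] + 'E_P1[f \o inr]).
Proof.
move=> mf /Lfun1_integrable f0 /Lfun1_integrable f1.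
by rewrite !expectation.unlock integral_half_mixture//; exact/measurable_EFinP.
Qed.

End half_mixture.

Section expectation_lemmas.
Context d (T : measurableType d) (R : realType) (P : probability T R).
Local Open Scope ereal_scope.

Lemma le_expectation (Y Z : T -> R) : Y \in Lfun P 1 -> Z \in Lfun P 1 ->
  (forall w, Y w <= Z w)%R -> 'E_P[Y] <= 'E_P[Z].
Proof.
move=> /Lfun1_integrable Y1 /Lfun1_integrable Z1 YZ; rewrite !expectation.unlock.
by apply: le_integral => // w _; rewrite lee_fin.
Qed.

Lemma Lfun2_Lfun1 (X : T -> R) : X \in Lfun P 2%:E -> X \in Lfun P 1.
Proof. exact/Lfun_subset12/fin_num_measure. Qed.

Lemma Lfun2_subr_cst (X : T -> R) a :
  X \in Lfun P 2%:E -> (X - cst a)%R \in Lfun P 2%:E.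
Proof.
move=> X2; have c2 : cst a \in Lfun P 2%:E := Lfun_cst _ _ _.
by rewrite rpredB ?lee1n.
Qed.

Lemma Lfun1_sqr_subr_cst (X : T -> R) a :
  X \in Lfun P 2%:E -> ((X - cst a) ^+ 2)%R \in Lfun P 1.
Proof. by move=> X2; apply: Lfun2_mul_Lfun1; exact: Lfun2_subr_cst. Qed.

Lemma expectation_sqr_subr_cst (X : T -> R) m s a :
    X \in Lfun P 2%:E -> 'E_P[X] = m%:E -> 'V_P[X] = s%:E ->
  'E_P[(X - cst a) ^+ 2] = (s + (m - a) ^+ 2)%R%:E.
Proof.
move=> X2 EX VX; have Xa2 := Lfun2_subr_cst a X2.
have X1 := Lfun2_Lfun1 X2.
have EXa : 'E_P[X - cst a] = (m - a)%:E.
  by rewrite expectationB ?Lfun_cst// EX expectation_cst.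
have := varianceE Xa2; rewrite varianceB_cst_r// VX EXa.
have /fineK <- := expectation_fin_num (Lfun2_mul_Lfun1 Xa2 Xa2).
by rewrite -EFin_expe -EFinB => -[->]; congr EFin; ring.
Qed.

End expectation_lemmas.

Section expectation_maxv.
Context d (T : measurableType d) (R : realType) (P : probability T R) (n : nat).
Variables (X : 'I_n -> T -> R) (mu v : 'I_n -> R).
Local Open Scope ereal_scope.
Hypotheses (n_gt0 : (0 < n)%N) (X2 : forall j, X j \in Lfun P 2%:E)
  (EX : forall j, 'E_P[X j] = (mu j)%:E) (VX : forall j, 'V_P[X j] = (v j ^+ 2)%:E).

Let X1 j : X j \in Lfun P 1 := Lfun2_Lfun1 (X2 j).

Lemma maxv_le_expectation_maxv : (maxv mu)%:E <= 'E_P[fun w => maxv (X^~ w)].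
Proof.
rewrite -(fineK (expectation_fin_num (Lfun1_maxv n_gt0 X1))) lee_fin.
apply: maxv_le => // j; rewrite -lee_fin fineK ?expectation_fin_num ?Lfun1_maxv//.
by rewrite -EX le_expectation ?Lfun1_maxv// => w; exact: le_maxv.
Qed.

Lemma expectation_maxv_le_sqr (c : 'I_n -> R) : (forall j, 0 < c j)%R ->
  'E_P[fun w => maxv (X^~ w)] <=
    (maxv mu + \sum_j (v j ^+ 2 + c j ^+ 2) / (4 * c j))%:E.
Proof.
move=> c_gt0.
pose h j := ((4 * c j)^-1 \o* (X j - cst (mu j - c j)) ^+ 2)%R.
have h1 j : h j \in Lfun P 1.
  by apply: Lfun_scale => //; exact: Lfun1_sqr_subr_cst.
have Eh j : 'E_P[h j] = ((v j ^+ 2 + c j ^+ 2) / (4 * c j))%:E.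
  rewrite expectationZl ?Lfun1_sqr_subr_cst//.
  rewrite (expectation_sqr_subr_cst _ (X2 j) (EX j) (VX j)) -EFinM.
  by congr EFin; rewrite mulrC; congr (_ * _)%R; ring.
have hE j w : h j w = ((X j w - mu j + c j) ^+ 2 / (4 * c j))%R.
  by rewrite /h /= !fctE; congr (_ ^+ 2 * _)%R; ring.
have bound1 : (cst (maxv mu) + \sum_j h j)%R \in Lfun P 1.
  by rewrite rpredD ?Lfun_cst ?rpred_sum.
suff <- : 'E_P[(cst (maxv mu) + \sum_j h j)%R] =
    (maxv mu + \sum_j (v j ^+ 2 + c j ^+ 2) / (4 * c j))%:E.
  apply: le_expectation (Lfun1_maxv n_gt0 X1) bound1 _ => w.
  by rewrite !fctE fct_sumE; under eq_bigr do rewrite hE; exact: maxv_le_sqrD.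
rewrite expectationD ?Lfun_cst ?rpred_sum// expectation_cst.
rewrite -(big_map h xpredT id) expectation_sum => [|_ /mapP[j _ ->]//].
by rewrite big_map; under eq_bigr do rewrite Eh; rewrite sumEFin.
Qed.

Lemma expectation_maxv_le : (forall j, 0 <= v j)%R ->
  'E_P[fun w => maxv (X^~ w)] <= (maxv mu + 2^-1 * \sum_j v j)%:E.
Proof.
move=> v_ge0; have Efin := expectation_fin_num (Lfun1_maxv n_gt0 X1).
rewrite -(fineK Efin) lee_fin; apply/ler_addgt0Pr => e e_gt0.
have n_pos : (0 < n%:R :> R)%R by rewrite ltr0n.
have eps_gt0 : (0 < e / n%:R)%R by rewrite divr_gt0.
(* c = v is optimal, but v may vanish *)
have c_gt0 j : (0 < v j + e / n%:R)%R by rewrite ltr_wpDl.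
have := expectation_maxv_le_sqr c_gt0.
rewrite -(fineK Efin) lee_fin => /le_trans; apply.
rewrite -addrA lerD2l.
apply: le_trans (ler_sum _ (fun j _ => sqr_addr_div_le (v_ge0 j) eps_gt0)) _.
rewrite big_split /= sumr_const card_ord -mulr_suml.
by rewrite -[(e / _ *+ n)%R]mulr_natr divfK ?gt_eqF// mulrC.
Qed.

End expectation_maxv.

Lemma sup_midpoint_le (R : realType) (A0 A1 A : set R) :
    has_sup A0 -> has_sup A1 -> has_ubound A ->
    (forall x0 x1, A0 x0 -> A1 x1 -> A (2^-1 * (x0 + x1))) ->
  2^-1 * (sup A0 + sup A1) <= sup A.
Proof.
move=> A0sup A1sup ubA mid; rewrite -sup_sumE// ler_pdivrMl//.
have [[x0 A0x0] _] := A0sup; have [[x1 A1x1] _] := A1sup.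
apply: ge_sup; first by exists (x0 + x1), x0 => //; exists x1.
move=> _ [y0 A0y0 [y1 A1y1 <-]]; rewrite -ler_pdivrMl//.
exact: ub_le_sup ubA _ (mid _ _ A0y0 A1y1).
Qed.

Definition expected_maxima (R : realType) (n : nat) (mu v : 'I_n -> R) : set R :=
  [set r | exists (d : measure_display) (T : measurableType d)
      (P : probability T R) (X : 'I_n -> {RV P >-> R}),
    [/\ forall j, (X j : T -> R) \in Lfun P 2%:E,
        forall j, ('E_P[X j] = (mu j)%:E)%E,
        forall j, ('V_P[X j] = (v j ^+ 2)%:E)%E &
        ('E_P[fun w => maxv (X^~ w)] = r%:E)%E]].

Section expected_maxima.
Context (R : realType) (n : nat) (n_gt0 : (0 < n)%N).
Implicit Types (mu v : 'I_n -> R).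

Lemma fmaxE mu v : fmax mu v = ereal_sup (EFin @` expected_maxima mu v).
Proof.
congr ereal_sup; apply/seteqP; split=> [e [d [T [P [X [X2 [EX [VX ->]]]]]]]|].
  have X1 j := Lfun2_Lfun1 (X2 j).
  have /fineK EM := expectation_fin_num (Lfun1_maxv n_gt0 X1).
  by exists (fine 'E_P[fun w => maxv (X^~ w)])%E => //; exists d, T, P, X.
by move=> _ [r [d [T [P [X [X2 EX VX EM]]]]] <-]; exists d, T, P, X.
Qed.

Lemma expected_maxima_bounds mu v r : (forall j, 0 <= v j) ->
  expected_maxima mu v r -> maxv mu <= r <= maxv mu + 2^-1 * \sum_j v j.
Proof.
move=> v_ge0 [d [T [P [X [X2 EX VX EM]]]]]; rewrite -!lee_fin -EM.
by rewrite maxv_le_expectation_maxv// expectation_maxv_le.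
Qed.

Lemma expected_maxima_cst (c : 'I_n -> R) : expected_maxima c (fun=> 0) (maxv c).
Proof.
exists default_measure_display, unit, \d_tt, (fun j => cst (c j)); split.
- by move=> j; exact: Lfun_cst.
- by move=> j; exact: expectation_cst.
- by move=> j; rewrite variance_cst expr0n.
- by rewrite -(expectation_cst \d_tt (maxv c)).
Qed.

Lemma expected_maxima_half_mixture (mu0 mu1 v0 v1 mu v : 'I_n -> R) r0 r1 :
    expected_maxima mu0 v0 r0 -> expected_maxima mu1 v1 r1 ->
    (forall j, mu j = 2^-1 * (mu0 j + mu1 j)) ->
    (forall j, v j ^+ 2 = 2^-1 * ((v0 j ^+ 2 + (mu0 j - mu j) ^+ 2)
                                + (v1 j ^+ 2 + (mu1 j - mu j) ^+ 2))) ->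
  expected_maxima mu v (2^-1 * (r0 + r1)).
Proof.
move=> [d0 [T0 [P0 [X0 [X02 EX0 VX0 EM0]]]]].
move=> [d1 [T1 [P1 [X1 [X12 EX1 VX1 EM1]]]]] mu_mid v_mid.
pose Q := half_mixture P0 P1; pose X j : {RV Q >-> R} := sum_case (X0 j) (X1 j).
have X01 j := Lfun2_Lfun1 (X02 j); have X11 j := Lfun2_Lfun1 (X12 j).
have EX j : ('E_Q[X j] = (mu j)%:E)%E.
  by rewrite expectation_half_mixture ?X01 ?X11// EX0 EX1 -EFinD -EFinM mu_mid.
exists default_measure_display, (sum_space T0 T1), Q, X; split => //.
- by move=> j; apply: Lfun_half_mixture; rewrite ?ler1n ?X02 ?X12.
- move=> j; rewrite /variance covariance.unlock EX /= expectation_half_mixture//.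
  + rewrite (expectation_sqr_subr_cst _ (X02 j) (EX0 j) (VX0 j)).
    rewrite (expectation_sqr_subr_cst _ (X12 j) (EX1 j) (VX1 j)).
    by rewrite -EFinD -EFinM v_mid.
  + exact: Lfun1_sqr_subr_cst (X02 j).
  + exact: Lfun1_sqr_subr_cst (X12 j).
- rewrite expectation_half_mixture ?(Lfun1_maxv n_gt0 X01) ?(Lfun1_maxv n_gt0 X11)//.
    by rewrite EM0 EM1 -EFinD -EFinM.
  exact: measurable_maxv.
Qed.

Lemma expected_maxima_neq0 mu v : expected_maxima mu v !=set0.
Proof.
eexists; apply: (expected_maxima_half_mixture
  (mu0 := fun j => mu j + v j) (mu1 := fun j => mu j - v j)
  (expected_maxima_cst _) (expected_maxima_cst _)) => j /=; by field.
Qed.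

Lemma has_sup_expected_maxima mu v : (forall j, 0 <= v j) ->
  has_sup (expected_maxima mu v).
Proof.
move=> v_ge0; split; first exact: expected_maxima_neq0.
by exists (maxv mu + 2^-1 * \sum_j v j) => r /(expected_maxima_bounds v_ge0)/andP[].
Qed.

Lemma fmax_sup mu v : (forall j, 0 <= v j) ->
  fmax mu v = (sup (expected_maxima mu v))%:E.
Proof.
move=> /(has_sup_expected_maxima mu) [A0 ubA].
by rewrite fmaxE ereal_sup_EFin.
Qed.

End expected_maxima.

Theorem lemma3p7 (R : realType) (n : nat) (hn : (0 < n)%N)
    (mu v : 'I_n -> R) (hv : forall j, 0 <= v j) :
  ((maxv mu)%:E <= fmax mu v /\
   fmax mu v <= (maxv mu + 2^-1 * \sum_(j < n) v j)%:E)%E /\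
  (forall (mu0 mu1 v0 v1 : 'I_n -> R),
     (forall j, 0 <= v0 j) -> (forall j, 0 <= v1 j) ->
     (forall j, mu j = 2^-1 * (mu0 j + mu1 j)) ->
     (forall j, v j ^+ 2 = 2^-1 * ((v0 j ^+ 2 + (mu0 j - mu j) ^+ 2)
                                 + (v1 j ^+ 2 + (mu1 j - mu j) ^+ 2))) ->
     ((2^-1)%:E * (fmax mu0 v0 + fmax mu1 v1) <= fmax mu v)%E).
Proof.
have supA := has_sup_expected_maxima hn mu hv; have [[r Ar] ubA] := supA.
rewrite fmax_sup// !lee_fin; split; first split.
- have /andP[mu_le_r _] := expected_maxima_bounds hn hv Ar.
  exact: le_trans mu_le_r (sup_upper_bound supA Ar).
- apply: ge_sup; first by exists r.
  by move=> r' /(expected_maxima_bounds hn hv)/andP[].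
move=> mu0 mu1 v0 v1 v0_ge0 v1_ge0 mu_mid v_mid.
rewrite !fmax_sup// -EFinD -EFinM lee_fin.
apply: (sup_midpoint_le (has_sup_expected_maxima hn _ v0_ge0)
  (has_sup_expected_maxima hn _ v1_ge0) ubA).
by move=> r0 r1 A0r0 A1r1; apply: (expected_maxima_half_mixture hn A0r0 A1r1 mu_mid).
Qed.
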